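(* In the strategic parking problem on a weighted line graph, any (random) pricing function $P$ on the vacant slots that satisfies the Harmonic Payment Conditions ensures harmonic behaviour of an arriving car, regardless of its goal: if its goal is vacant it parks there; otherwise, letting $v_L,v_R$ be the nearest vacant slots to the left and right of its goal $v$, it parks at $v_L$ with probability $\frac{d(v,v_R)}{d(v,v_L)+d(v,v_R)}$ and at $v_R$ otherwise.
   Context: Parking slots are vertices on a line with path distances $d$; some are occupied and $V'$ is the set of vacant slots. An arriving car with goal vertex $g$ parks at a vacant slot $x$ minimizing $d(g,x)+P(x)$. A block is a maximal contiguous run of occupied slots; for a block $B_j$, $L(B_j)$ and $R(B_j)$ are the first vacant slots to its left and right, $d_j=d(L(B_j),R(B_j))$, and $D_j$ is the uniform distribution on $[-d_j,d_j]$. $P:V'\to\mathbb{R}_{\ge0}$ satisfies the Harmonic Payment Conditions if (1) for every block $B_j$, $P(L(B_j))-P(R(B_j))\sim D_j$; and (2) for any $u,v\in V'$ with no vacant slot between them, $-d(u,v)<P(u)-P(v)<d(u,v)$. *)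

From HB Require Import structures.
From mathcomp Require Import all_boot all_order all_algebra.
From mathcomp Require Import all_classical all_reals all_analysis.
Set Implicit Arguments. Unset Strict Implicit. Unset Printing Implicit Defensive.
Import Order.TTheory GRing.Theory Num.Theory.
Local Open Scope classical_set_scope.
Local Open Scope ring_scope.

(* The weighted line graph: slots 'I_n placed at strictly increasing
   positions pos; the path distance is d(u,v) = |pos u - pos v|. *)
Definition line_dist (R : realType) (n : nat) (pos : 'I_n -> R) (u v : 'I_n) : R :=
  `|pos u - pos v|.

Definition block_LR (n : nat) (occ : {set 'I_n}) (l r : 'I_n) : Prop :=
  [/\ l \notin occ, r \notin occ, (l.+1 < r)%N &
      forall k : 'I_n, (l < k < r)%N -> k \in occ].

Definition uniform_sym (R : realType) (d : measure_display) (Omega : measurableType d)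
  (Pr : probability Omega R) (f : Omega -> R) (c : R) : Prop :=
  measurable_fun setT f /\
  forall A : set R, measurable A ->
    Pr (f @^-1` A) = (lebesgue_measure (A `&` [set x : R | (- c <= x <= c)%R]) * ((2 * c)^-1)%:E)%E.

(* Harmonic Payment Conditions for a random price P : Omega -> 'I_n -> R
   (only values on vacant slots are relevant). *)
Definition harmonic_payment (R : realType) (d : measure_display) (Omega : measurableType d)
  (Pr : probability Omega R) (n : nat) (pos : 'I_n -> R) (occ : {set 'I_n})
  (P : Omega -> 'I_n -> R) : Prop :=
  (forall l r : 'I_n, block_LR occ l r ->
     uniform_sym Pr (fun w => P w l - P w r) (line_dist pos l r)) /\
  (forall w (u v : 'I_n), u \notin occ -> v \notin occ -> (u < v)%N ->
     (forall k : 'I_n, (u < k < v)%N -> k \in occ) ->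
     - line_dist pos u v < P w u - P w v < line_dist pos u v).

Definition parks_at (R : realType) (n : nat) (pos : 'I_n -> R) (occ : {set 'I_n})
  (p : 'I_n -> R) (g x : 'I_n) : Prop :=
  x \notin occ /\
  forall y : 'I_n, y \notin occ -> y != x ->
    line_dist pos g x + p x < line_dist pos g y + p y.

From HB Require Import structures.
From mathcomp Require Import all_boot all_order all_algebra.
From mathcomp Require Import all_classical all_reals all_analysis.
From mathcomp Require Import lra zify ring.
Import Order.TTheory GRing.Theory Num.Theory.
Set Implicit Arguments. Unset Strict Implicit.
Local Open Scope classical_set_scope.
Local Open Scope ring_scope.

(* Chaining condition (2) over the vacant slots between two vacant slots u < v
   gives |P u - P v| < d(u,v).  Hence, seen from the goal, a vacant slot lying
   beyond another vacant slot always costs strictly more: the goal itself wins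
   if it is vacant, otherwise one of its nearest vacant neighbours vL, vR does.
   The car parks at vL exactly when P vL - P vR < d(g,vR) - d(g,vL), and as
   P vL - P vR is uniform on [-(d(g,vL) + d(g,vR)), d(g,vL) + d(g,vR)] this has
   probability d(g,vR) / (d(g,vL) + d(g,vR)). *)

Section UniformSym.
Variables (R : realType) (d : measure_display) (Omega : measurableType d).
Variables (Pr : probability Omega R) (f : Omega -> R) (D : R).
Hypothesis f_unif : uniform_sym Pr f D.

Lemma uniform_sym_itv (i : interval R) :
  Pr (f @^-1` [set` i]) =
  (lebesgue_measure ([set` i] `&` [set x : R | (- D <= x <= D)%R]) *
   ((2 * D)^-1)%:E)%E.
Proof. by case: f_unif => _ ->. Qed.

Lemma uniform_sym_lt (c : R) : - D <= c <= D ->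
  Pr (f @^-1` `]-oo, c[) = ((c + D) / (2 * D))%:E.
Proof.
move=> /andP[Dc cD]; rewrite uniform_sym_itv.
have -> : `]-oo, c[ `&` [set x : R | - D <= x <= D] = `[- D, c[%classic.
  apply/seteqP; split => x /=; rewrite !in_itv /=.
    by move=> [-> /andP[-> _]].
  by move=> /andP[Dx xc]; split => //; apply/andP; split; lra.
rewrite lebesgue_measure_itv /= lte_fin.
have [Dc'|cD'] := ltP (- D) c; last first.
  have -> : c = - D by lra.
  by rewrite addNr mul0r mul0e.
by rewrite opprK -EFinD -EFinM.
Qed.

Lemma uniform_sym_gt (c : R) : - D <= c <= D ->
  Pr (f @^-1` `]c, +oo[) = ((D - c) / (2 * D))%:E.
Proof.
move=> /andP[Dc cD]; rewrite uniform_sym_itv.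
have -> : `]c, +oo[ `&` [set x : R | - D <= x <= D] = `]c, D]%classic.
  apply/seteqP; split => x /=; rewrite !in_itv /= ?andbT.
    by move=> [-> /andP[_ ->]].
  by move=> /andP[cx xD]; split => //; apply/andP; split; lra.
rewrite lebesgue_measure_itv /= lte_fin.
have [cD'|Dc'] := ltP c D; last first.
  have -> : c = D by lra.
  by rewrite subrr mul0r mul0e.
by rewrite -EFinD -EFinM.
Qed.

End UniformSym.

Section LinePricing.
Variables (R : realType) (n : nat) (pos : 'I_n -> R) (occ : {set 'I_n}).
Hypothesis pos_incr : forall i j : 'I_n, (i < j)%N -> pos i < pos j.

Lemma line_distC (u v : 'I_n) : line_dist pos u v = line_dist pos v u.
Proof. exact: distrC. Qed.

Lemma line_dist_leq {u v : 'I_n} : (u <= v)%N -> line_dist pos u v = pos v - pos u.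
Proof.
rewrite leq_eqVlt => /orP[/eqP/val_inj-> | /pos_incr uv].
  by rewrite /line_dist !subrr normr0.
by rewrite line_distC /line_dist ger0_norm // subr_ge0 ltW.
Qed.

Lemma vacant_outside_gap {vL vR y : 'I_n} :
  (forall k : 'I_n, (vL < k < vR)%N -> k \in occ) ->
  y \notin occ -> y != vL -> y != vR -> (y < vL)%N \/ (vR < y)%N.
Proof.
move=> gap y_vac yL yR; case: (ltngtP y vL) => [|Ly|/val_inj yL']; first by left.
- case: (ltngtP y vR) => [yR'||/val_inj yR']; last by rewrite yR' eqxx in yR.
  + by rewrite gap ?Ly ?yR' in y_vac.
  + by right.
- by rewrite yL' eqxx in yL.
Qed.

Variable p : 'I_n -> R.
Hypothesis price_adj : forall u v : 'I_n,
  u \notin occ -> v \notin occ -> (u < v)%N ->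
  (forall k : 'I_n, (u < k < v)%N -> k \in occ) ->
  - line_dist pos u v < p u - p v < line_dist pos u v.

Lemma price_diff_lt {u v : 'I_n} : u \notin occ -> v \notin occ -> (u < v)%N ->
  `|p u - p v| < pos v - pos u.
Proof.
have [m le_vu] : exists m, (v - u <= m)%N by exists (v - u)%N.
elim: m u v le_vu => [|m IH] u v le_vu u_vac v_vac uv; first by lia.
have [/existsP[k /andP[/andP[uk kv] k_vac]] | /existsPn no_vac] :=
  boolP [exists k : 'I_n, (u < k < v)%N && (k \notin occ)].
  have uk_m : (k - u <= m)%N by lia.
  have kv_m : (v - k <= m)%N by lia.
  rewrite (_ : pos v - pos u = pos k - pos u + (pos v - pos k)); last by ring.
  apply: le_lt_trans (ler_distD (p k) _ _) _.
  exact: ltrD (IH u k uk_m u_vac k_vac uk) (IH k v kv_m k_vac v_vac kv).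
rewrite ltr_norml -(line_dist_leq (ltnW uv)); apply: price_adj => // k uvk.
by apply: contraR (no_vac k) => k_vac; rewrite uvk.
Qed.

Lemma cheaper_left_of_goal (g x y : 'I_n) : x \notin occ -> y \notin occ ->
  (y < x)%N -> (x <= g)%N ->
  line_dist pos g x + p x < line_dist pos g y + p y.
Proof.
move=> x_vac y_vac yx xg; have := price_diff_lt y_vac x_vac yx.
rewrite line_distC (line_distC g y) (line_dist_leq xg).
rewrite (line_dist_leq (ltnW (leq_trans yx xg))).
by rewrite ltr_norml => /andP[? ?]; lra.
Qed.

Lemma cheaper_right_of_goal (g x y : 'I_n) : x \notin occ -> y \notin occ ->
  (g <= x)%N -> (x < y)%N ->
  line_dist pos g x + p x < line_dist pos g y + p y.
Proof.
move=> x_vac y_vac gx xy; have := price_diff_lt x_vac y_vac xy.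
rewrite (line_dist_leq gx) (line_dist_leq (ltnW (leq_ltn_trans gx xy))).
by rewrite ltr_norml => /andP[? ?]; lra.
Qed.

Lemma parks_at_vacant_goal (g : 'I_n) : g \notin occ -> parks_at pos occ p g g.
Proof.
move=> g_vac; split => // y y_vac yg; case: (ltngtP y g) => [yg'|gy|/val_inj yg'].
- exact: cheaper_left_of_goal.
- exact: cheaper_right_of_goal.
- by rewrite yg' eqxx in yg.
Qed.

Section Gap.
Variables (g vL vR : 'I_n).
Hypotheses (Lg : (vL < g)%N) (gR : (g < vR)%N).
Hypotheses (vL_vac : vL \notin occ) (vR_vac : vR \notin occ).
Hypothesis gap : forall k : 'I_n, (vL < k < vR)%N -> k \in occ.

Let vLR_neq : vL != vR.
Proof. by apply/eqP => /(congr1 val) /=; lia. Qed.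

Lemma parks_at_gap_left :
  parks_at pos occ p g vL <->
  p vL - p vR < line_dist pos g vR - line_dist pos g vL.
Proof.
split=> [[_ /(_ vR vR_vac)] | vL_best].
  by rewrite eq_sym vLR_neq => /(_ isT); lra.
have LR : line_dist pos g vL + p vL < line_dist pos g vR + p vR by lra.
split=> // y y_vac yL; have [->|yR] := eqVneq y vR; first exact: LR.
case: (vacant_outside_gap gap y_vac yL yR) => [yL'|Ry].
  exact: cheaper_left_of_goal (ltnW Lg).
by apply: lt_trans LR _; apply: cheaper_right_of_goal (ltnW gR) _.
Qed.

Lemma parks_at_gap_right :
  parks_at pos occ p g vR <->
  line_dist pos g vR - line_dist pos g vL < p vL - p vR.
Proof.
split=> [[_ /(_ vL vL_vac)] | vR_best].
  by rewrite vLR_neq => /(_ isT); lra.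
have RL : line_dist pos g vR + p vR < line_dist pos g vL + p vL by lra.
split=> // y y_vac yR; have [->|yL] := eqVneq y vL; first exact: RL.
case: (vacant_outside_gap gap y_vac yL yR) => [yL'|Ry].
  by apply: lt_trans RL _; apply: cheaper_left_of_goal (ltnW Lg).
exact: cheaper_right_of_goal (ltnW gR) _.
Qed.

End Gap.
End LinePricing.

Theorem lemma6 (R : realType) (d : measure_display) (Omega : measurableType d)
  (Pr : probability Omega R) (n : nat) (pos : 'I_n -> R) (occ : {set 'I_n})
  (P : Omega -> 'I_n -> R) :
  (forall i j : 'I_n, (i < j)%N -> pos i < pos j) ->
  (forall w (u : 'I_n), u \notin occ -> 0 <= P w u) ->
  harmonic_payment Pr pos occ P ->
  (forall g : 'I_n, g \notin occ -> forall w, parks_at pos occ (P w) g g) /\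
  (forall g vL vR : 'I_n, g \in occ -> (vL < g < vR)%N ->
     vL \notin occ -> vR \notin occ ->
     (forall k : 'I_n, (vL < k < vR)%N -> k \in occ) ->
     let p := line_dist pos g vR / (line_dist pos g vL + line_dist pos g vR) in
     Pr [set w | parks_at pos occ (P w) g vL] = p%:E /\
     Pr [set w | parks_at pos occ (P w) g vR] = (1 - p)%:E).
Proof.
move=> pos_incr _ [unif adj].
split=> [g g_vac w | g vL vR _ /andP[Lg gR] vL_vac vR_vac gap p].
  exact (parks_at_vacant_goal pos_incr (adj w) g_vac).
set f := fun w => P w vL - P w vR.
set c := line_dist pos g vR - line_dist pos g vL.
have LR := ltn_trans Lg gR.
have dLR : line_dist pos vL vR = line_dist pos g vL + line_dist pos g vR.
  rewrite (line_distC pos g vL) (line_dist_leq pos_incr (ltnW LR)).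
  by rewrite (line_dist_leq pos_incr (ltnW Lg)) (line_dist_leq pos_incr (ltnW gR)); ring.
have dgL : 0 < line_dist pos g vL.
  by rewrite line_distC (line_dist_leq pos_incr (ltnW Lg)) subr_gt0 pos_incr.
have dgR : 0 < line_dist pos g vR.
  by rewrite (line_dist_leq pos_incr (ltnW gR)) subr_gt0 pos_incr.
have f_unif : uniform_sym Pr f (line_dist pos vL vR).
  by apply: unif; split=> //; apply: leq_ltn_trans Lg gR.
have cD : - line_dist pos vL vR <= c <= line_dist pos vL vR.
  by rewrite dLR /c; apply/andP; split; lra.
have -> : [set w | parks_at pos occ (P w) g vL] = f @^-1` `]-oo, c[.
  apply/predeqP => w; rewrite /= in_itv /=.
  exact (parks_at_gap_left pos_incr (adj w) Lg gR vL_vac vR_vac gap).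
have -> : [set w | parks_at pos occ (P w) g vR] = f @^-1` `]c, +oo[.
  apply/predeqP => w; rewrite /= in_itv /= andbT.
  exact (parks_at_gap_right pos_incr (adj w) Lg gR vL_vac vR_vac gap).
rewrite (uniform_sym_lt f_unif cD) (uniform_sym_gt f_unif cD).
by rewrite /p /c dLR; split; congr _%:E; field; lra.
Qed.
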